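(* Let $\mathcal{X}$ be a Hilbert module over a pro-$C^*$-algebra $\mathcal{A}$, let $K\in Hom^*_{\mathcal{A}}(\mathcal{X})$, let $\{\xi_i\}_{i\in I}$ be a $K$-frame for $\mathcal{X}$, and let $T\in Hom^*_{\mathcal{A}}(\mathcal{X})$ be uniformly bounded and a co-isometry (i.e. $TT^*=I$) with $TK=KT$. Then $\{T\xi_i\}_{i\in I}$ is a $K$-frame for $\mathcal{X}$.
   Context: A pro-$C^*$-algebra $\mathcal{A}$ is a complete Hausdorff topological $*$-algebra whose topology is given by its continuous $C^*$-seminorms $S(\mathcal{A})$. A Hilbert $\mathcal{A}$-module $\mathcal{X}$ is a left $\mathcal{A}$-module with an $\mathcal{A}$-valued inner product, complete for $\bar p_{\mathcal{X}}(\xi)=\sqrt{p(\langle\xi,\xi\rangle)}$. $Hom^*_{\mathcal{A}}(\mathcal{X})$ denotes adjointable bounded $\mathcal{A}$-module maps; $T$ is uniformly bounded if there is a single $C>0$ with $\bar p_{\mathcal{X}}(T\xi)\le C\bar p_{\mathcal{X}}(\xi)$ for all $p,\xi$. A sequence $\{\xi_i\}_{i\in I}$ ($I$ countable) is a $K$-frame for $\mathcal{X}$ if $\sum_i\langle\xi,\xi_i\rangle\langle\xi_i,\xi\rangle$ converges in $\mathcal{A}$ and there are $A,B>0$ with $A\langle K^*\xi,K^*\xi\rangle\le\sum_i\langle\xi,\xi_i\rangle\langle\xi_i,\xi\rangle\le B\langle\xi,\xi\rangle$ for all $\xi\in\mathcal{X}$. *)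

From HB Require Import structures.
From mathcomp Require Import all_boot all_order all_algebra.
From mathcomp Require Import boolp classical_sets filter reals.
From mathcomp Require Import finmap.
From mathcomp Require Import complex.

Set Implicit Arguments.
Unset Strict Implicit.
Unset Printing Implicit Defensive.

Import Order.TTheory GRing.Theory Num.Theory.
Local Open Scope ring_scope.

Section ProCStar.
Variable R : realType.
Local Notation C := R[i].

Record star_alg (A : lmodType C) := StarAlg {
  amul : A -> A -> A;
  astar : A -> A;
  amulA : forall a b c, amul a (amul b c) = amul (amul a b) c;
  amulDl : forall a b c, amul (a + b) c = amul a c + amul b c;
  amulDr : forall a b c, amul a (b + c) = amul a b + amul a c;
  amulZl : forall (z : C) a b, amul (z *: a) b = z *: amul a b;
  amulZr : forall (z : C) a b, amul a (z *: b) = z *: amul a b;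
  astarK : forall a, astar (astar a) = a;
  astarD : forall a b, astar (a + b) = astar a + astar b;
  astarZ : forall (z : C) a, astar (z *: a) = (conjc z) *: astar a;
  astarM : forall a b, astar (amul a b) = amul (astar b) (astar a)
}.

Definition cstar_seminorm (A : lmodType C) (SA : star_alg A) (p : A -> R) :=
  [/\ forall a, 0 <= p a,
      forall a b, p (a + b) <= p a + p b,
      forall (z : C) a, p (z *: a) = Normc.normc z * p a,
      forall a b, p (amul SA a b) <= p a * p b
    & forall a, p (amul SA (astar SA a) a) = p a ^+ 2].

(* A seminorm q is continuous for the locally convex topology generated by
   the family S iff it is dominated by a multiple of a finite sum of
   members of S. *)
Definition continuous_wrt (A : lmodType C) (S : set (A -> R)) (q : A -> R) :=
  exists (ps : seq (A -> R)) (c : R),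
    (forall p, p \in ps -> S p) /\
    (forall a, q a <= c * \sum_(p <- ps) p a).

Definition seminorm_complete (X : lmodType C) (N : set (X -> R)) :=
  forall F : set_system X, ProperFilter F ->
    (forall n, N n -> forall e : R, 0 < e ->
        exists2 U, F U & forall x y, U x -> U y -> n (x - y) < e) ->
    exists l : X, forall n, N n -> forall e : R, 0 < e ->
        F (fun x => n (x - l) < e).

(* A pro-C*-algebra: a complete Hausdorff topological *-algebra whose
   topology is given by the family [sn] of its continuous C*-seminorms. *)
Record pro_cstar (A : lmodType C) := ProCStar {
  pc_alg :> star_alg A;
  sn : set (A -> R);
  sn_cstar : forall p, sn p -> cstar_seminorm pc_alg p;
  sn_all : forall q, cstar_seminorm pc_alg q -> continuous_wrt sn q -> sn q;
  sn_hausdorff : forall a, (forall p, sn p -> p a = 0) -> a = 0;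
  sn_complete : seminorm_complete sn
}.

Section Order.
Variables (A : lmodType C) (PA : pro_cstar A).

Definition apos (a : A) := exists b : A, a = amul PA (astar PA b) b.
Definition ale (a b : A) := apos (b - a).

Definition has_sum (I : countType) (f : I -> A) (s : A) :=
  forall p, sn PA p -> forall e : R, 0 < e ->
    exists F0 : {fset I}, forall F : {fset I}, fsubset F0 F ->
      p (\sum_(i <- F) f i - s) < e.

End Order.

Record hilbert_module (A : lmodType C) (PA : pro_cstar A) (X : lmodType C) :=
  HilbMod {
  act : A -> X -> X;
  ip : X -> X -> A;
  actA : forall a b x, act (amul PA a b) x = act a (act b x);
  actDl : forall a b x, act (a + b) x = act a x + act b x;
  actDr : forall a x y, act a (x + y) = act a x + act a y;
  actZl : forall (z : C) a x, act (z *: a) x = z *: act a x;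
  actZr : forall (z : C) a x, act a (z *: x) = z *: act a x;
  ipDl : forall x y w, ip (x + y) w = ip x w + ip y w;
  ipZl : forall (z : C) x y, ip (z *: x) y = z *: ip x y;
  ipAl : forall a x y, ip (act a x) y = amul PA a (ip x y);
  ip_star : forall x y, astar PA (ip x y) = ip y x;
  ip_pos : forall x, apos PA (ip x x);
  ip_def : forall x, ip x x = 0 -> x = 0;
  hm_complete :
    seminorm_complete [set n | exists2 p, sn PA p & n = fun x => Num.sqrt (p (ip x x))]
}.

Section Operators.
Variables (A : lmodType C) (PA : pro_cstar A) (X : lmodType C)
          (HX : hilbert_module PA X).

Definition nX (p : A -> R) (x : X) : R := Num.sqrt (p (ip HX x x)).

Definition adjoint (T Ts : X -> X) := forall x y, ip HX (T x) y = ip HX x (Ts y).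

Definition hom_star (T : X -> X) :=
  [/\ forall x y, T (x + y) = T x + T y,
      forall (z : C) x, T (z *: x) = z *: T x,
      forall a x, T (act HX a x) = act HX a (T x),
      (forall p, sn PA p -> exists2 c : R, 0 <= c & forall x, nX p (T x) <= c * nX p x)
    & exists Ts, adjoint T Ts].

Definition unif_bounded (T : X -> X) :=
  exists2 c : R, 0 < c & forall p, sn PA p -> forall x, nX p (T x) <= c * nX p x.

(* K-frame, where Ks is the adjoint K^* of K *)
Definition K_frame (I : countType) (Ks : X -> X) (xi : I -> X) :=
  (forall x, exists s, has_sum PA (fun i => amul PA (ip HX x (xi i)) (ip HX (xi i) x)) s) /\
  exists (a b : R), [/\ 0 < a, 0 < b &
    forall x s, has_sum PA (fun i => amul PA (ip HX x (xi i)) (ip HX (xi i) x)) s ->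
      ale PA ((a%:C)%C *: ip HX (Ks x) (Ks x)) s /\ ale PA s ((b%:C)%C *: ip HX x x)].

End Operators.
End ProCStar.

From HB Require Import structures.
From mathcomp Require Import all_boot all_order all_algebra.
From mathcomp Require Import boolp classical_sets filter reals.
From mathcomp Require Import finmap.
From mathcomp Require Import complex.

Set Implicit Arguments.
Unset Strict Implicit.
Unset Printing Implicit Defensive.

Import GRing.Theory Num.Theory.
Local Open Scope ring_scope.

(* Since T T^* = I, the adjoint T^* is an isometry for the inner product and
   <x, T xi_i> = <T^* x, xi_i>; so the frame series of {T xi_i} at x is the
   frame series of {xi_i} at T^* x.  As T^* commutes with K^*, the frame
   inequalities at T^* x are exactly the required ones at x. *)

Section FrameImage.
Variables (R : realType) (A : lmodType R[i]) (PA : pro_cstar A).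
Variables (X : lmodType R[i]) (HX : hilbert_module PA X).

Local Notation ip := (ip HX).

Lemma ipNl (x y : X) : ip (- x) y = - ip x y.
Proof. by rewrite -scaleN1r ipZl scaleN1r. Qed.

Lemma ip_injl (x y : X) : (forall u, ip x u = ip y u) -> x = y.
Proof.
move=> exy; apply/eqP; rewrite -subr_eq0; apply/eqP.
by apply: (ip_def (h := HX)); rewrite ipDl ipNl exy subrr.
Qed.

Lemma adjointr (T Ts : X -> X) : adjoint HX T Ts ->
  forall x y, ip x (T y) = ip (Ts x) y.
Proof. by move=> hTs x y; rewrite -ip_star hTs ip_star. Qed.

Lemma adjoint_ip_coisometry (T Ts : X -> X) :
  adjoint HX T Ts -> (forall x, T (Ts x) = x) ->
  forall x, ip (Ts x) (Ts x) = ip x x.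
Proof. by move=> hTs hco x; rewrite -hTs hco. Qed.

Lemma adjoint_comm (K Ks T Ts : X -> X) :
  adjoint HX K Ks -> adjoint HX T Ts -> (forall x, T (K x) = K (T x)) ->
  forall x, Ks (Ts x) = Ts (Ks x).
Proof.
move=> hKs hTs hTK x; apply: ip_injl => u.
rewrite -ip_star -[RHS]ip_star; congr (astar _ _).
by rewrite -hKs -hTs hTK hKs -hTs.
Qed.

Lemma K_frame_adjoint_isometry (I : countType) (Ks T Ts : X -> X) (xi : I -> X) :
  adjoint HX T Ts -> (forall x, ip (Ts x) (Ts x) = ip x x) ->
  (forall x, Ks (Ts x) = Ts (Ks x)) ->
  K_frame HX Ks xi -> K_frame HX Ks (fun i => T (xi i)).
Proof.
move=> hTs isoTs hKsTs [hsum [a [b [a0 b0 hab]]]].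
have series_image x : (fun i => amul PA (ip x (T (xi i))) (ip (T (xi i)) x))
    = (fun i => amul PA (ip (Ts x) (xi i)) (ip (xi i) (Ts x))).
  by apply: funext => i; rewrite (adjointr hTs) hTs.
split=> [x|]; first by rewrite series_image; apply: hsum.
exists a, b; split=> // x s; rewrite series_image => /hab[lo hi].
by rewrite hKsTs !isoTs in lo; rewrite isoTs in hi.
Qed.

End FrameImage.

Theorem theorem4p13 (R : realType) (A : lmodType R[i]) (PA : pro_cstar A)
    (X : lmodType R[i]) (HX : hilbert_module PA X)
    (K Ks : X -> X) (hK : hom_star HX K) (hKs : adjoint HX K Ks)
    (I : countType) (xi : I -> X) (hxi : K_frame HX Ks xi)
    (T Ts : X -> X) (hT : hom_star HX T) (hTs : adjoint HX T Ts)
    (hTu : unif_bounded HX T) (hco : forall x, T (Ts x) = x)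
    (hTK : forall x, T (K x) = K (T x)) :
  K_frame HX Ks (fun i => T (xi i)).
Proof.
apply: (K_frame_adjoint_isometry hTs) hxi.
- exact: adjoint_ip_coisometry hTs hco.
- exact: adjoint_comm hKs hTs hTK.
Qed.
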